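(* Let $n\ge2$, let $\mathbb{A}=(A_{ij})_{i,j=1}^n$ be an operator matrix as in the context, and assume that for all $i\ne j$ there are constants $c_{ij},d_{ij}\ge0$ such that $\|A_{ij}x_j\|_{X_i}\le c_{ij}\|A_{jj}x_j\|_{X_j}+d_{ij}\|x_j\|_{X_j}$ for all $x_j\in\mathcal{D}(A_{jj})$, and moreover $\sum_{i=1,i\ne j}^nc_{ij}<1$ for every $j$. Let $\pi$ be a permutation of $\{1,\ldots,n\}$. Then $\mathbb{A}(\pi)_k$ is closed on its domain for all $k\in\{1,\ldots,n\}$.
   Context: Let $X_1,\ldots,X_n$ be complex Banach spaces and $X=X_1\times\cdots\times X_n$ with norm $\|x\|=\sum_i\|x_i\|_{X_i}$. For $i,j$, $A_{ij}:\mathcal{D}(A_{ij})\subset X_j\to X_i$ are linear, $A_{ii}$ closed, and for $i\ne j$ $\mathcal{D}(A_{jj})\subset\mathcal{D}(A_{ij})$. $\mathbb{A}=(A_{ij})$ acts on $\mathcal{D}(A_{11})\times\cdots\times\mathcal{D}(A_{nn})$ by $(\mathbb{A}x)_i=\sum_jA_{ij}x_j$. For a permutation $\pi$, $\mathbb{A}(\pi):=(A_{\pi^{-1}(i),\pi^{-1}(j)})_{i,j=1}^n$ acts on $X_{\pi^{-1}(1)}\times\cdots\times X_{\pi^{-1}(n)}$ with domain $\prod_i\mathcal{D}(A_{\pi^{-1}(i),\pi^{-1}(i)})$, and $\mathbb{A}(\pi)_k$ is its upper-left $k\times k$ block, acting on $X_{\pi^{-1}(1)}\times\cdots\times X_{\pi^{-1}(k)}$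 with domain $\prod_{i=1}^k\mathcal{D}(A_{\pi^{-1}(i),\pi^{-1}(i)})$. *)

From mathcomp Require Import all_boot all_order all_algebra all_fingroup.
From mathcomp Require Import all_classical all_reals topology normedtype sequences.
From mathcomp.real_closed Require Export complex.
Export numFieldNormedType.Exports.
Import GRing.Theory Num.Theory.
Local Open Scope ring_scope.
Local Open Scope classical_set_scope.

Set Implicit Arguments.
Unset Strict Implicit.
Unset Printing Implicit Defensive.

Definition is_subspace (K : numFieldType) (V : lmodType K) (D : set V) : Prop :=
  [/\ D 0, (forall x y, D x -> D y -> D (x + y)) & (forall (a : K) x, D x -> D (a *: x))].

Definition linear_on (K : numFieldType) (U V : lmodType K) (D : set U) (f : U -> V) : Prop :=
  forall (a : K) x y, D x -> D y -> f (a *: x + y) = a *: f x + f y.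

Definition closed_op (K : numFieldType) (U V : normedModType K)
  (D : set U) (f : U -> V) : Prop :=
  forall (u : nat -> U) (x : U) (y : V),
    (forall m, D (u m)) -> u @ \oo --> x -> (f \o u) @ \oo --> y ->
    D x /\ f x = y.

(* The operator matrix (A_{s i, s j})_{i,j < k} built from the rows/columns
   selected by s : 'I_k -> 'I_n, acting on X_(s 0) x ... x X_(s (k-1)). *)
Definition block_apply (K : numFieldType) (n k : nat) (X : 'I_n -> normedModType K)
  (A : forall i j : 'I_n, X j -> X i) (s : 'I_k -> 'I_n)
  (x : forall i : 'I_k, X (s i)) (i : 'I_k) : X (s i) :=
  \sum_(j < k) A (s i) (s j) (x j).

Definition block_dom (K : numFieldType) (n k : nat) (X : 'I_n -> normedModType K)
  (D : forall i j : 'I_n, set (X j)) (s : 'I_k -> 'I_n)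
  (x : forall i : 'I_k, X (s i)) : Prop :=
  forall i : 'I_k, D (s i) (s i) (x i).

(* Closedness of the block operator on the product space with the sum norm;
   convergence in the sum norm is written componentwise. *)
Definition block_closed (K : numFieldType) (n k : nat) (X : 'I_n -> normedModType K)
  (A : forall i j : 'I_n, X j -> X i) (D : forall i j : 'I_n, set (X j))
  (s : 'I_k -> 'I_n) : Prop :=
  forall (u : nat -> forall i : 'I_k, X (s i))
         (x y : forall i : 'I_k, X (s i)),
    (forall m, block_dom D (u m)) ->
    (forall i, (fun m => u m i) @ \oo --> x i) ->
    (forall i, (fun m => block_apply A (u m) i) @ \oo --> y i) ->
    block_dom D x /\ (forall i, block_apply A x i = y i).

(* Index map for A(pi)_k : position i (0-based, i < k) carries index pi^{-1}(i). *)
Definition perm_sel (n k : nat) (pi : 'S_n) (hk : (k <= n)%N) (i : 'I_k) : 'I_n :=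
  (pi^-1)%g (widen_ord hk i).

From mathcomp Require Import all_boot all_order all_algebra all_fingroup.
From mathcomp Require Import all_classical all_reals topology normedtype sequences.
Import numFieldNormedType.Exports Order.POrderTheory GRing.Theory Num.Theory.
Local Open Scope ring_scope.
Local Open Scope classical_set_scope.

(* For v, w in the block domain put a_j := |A_jj (v_j - w_j)|. Relative
   boundedness of the off-diagonal entries gives
   a_i <= |(Av - Aw)_i| + sum_(j <> i) c_ij a_j + sum_(j <> i) d_ij |v_j - w_j|,
   and since every column sum of (c_ij) stays below 1 (also after restricting
   to the selected indices), summing over i bounds each a_j by the graph-norm
   distance of v and w. Along a sequence converging in graph norm the diagonal
   components are therefore Cauchy; closedness of A_jj puts the limit in the
   domain, and relative boundedness carries the off-diagonal terms to the
   limit. The permutation only enters through the injectivity of the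
   selected indices. *)

Section normed_convergence.
Context {K : numFieldType} {T : Type} {F : set_system T} {FF : Filter F}.

Lemma norm_cvgr0_le {V : normedModType K} (f : T -> V) (g : T -> K) :
  (forall t, `|f t| <= g t) -> g @ F --> 0 -> `|f t| @[t --> F] --> (0 : K).
Proof.
move=> f_le /cvgrPdist_lt g0; apply/cvgrPdist_lt => e e0.
apply: filterS (g0 e e0) => t; rewrite !sub0r !normrN normr_id.
by rewrite (ger0_norm (le_trans (normr_ge0 _) (f_le t))); apply: le_lt_trans.
Qed.

Lemma cvgr_distB0P {V : normedModType K} (f : T -> V) (a : V) :
  `|f t - a| @[t --> F] --> (0 : K) <-> f @ F --> a.
Proof.
split=> /cvgrPdist_lt f_a; apply/cvgrPdist_lt => e e0;
  by apply: filterS (f_a e e0) => t; rewrite sub0r normrN normr_id distrC.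
Qed.

Lemma cvg_sumr {V : normedModType K} {I : Type} (r : seq I) (P : pred I)
    (f : I -> T -> V) (a : I -> V) :
  (forall i, P i -> f i @ F --> a i) ->
  \sum_(i <- r | P i) f i t @[t --> F] --> \sum_(i <- r | P i) a i.
Proof. by move=> f_a; apply: cvg_big => //; exact: add_continuous. Qed.

Lemma cvgr0_sum {V : normedModType K} {I : Type} (r : seq I) (P : pred I)
    (f : I -> T -> V) :
  (forall i, P i -> f i @ F --> 0) -> \sum_(i <- r | P i) f i t @[t --> F] --> 0.
Proof. by move=> f0; have := cvg_sumr r P f (fun=> 0) f0; rewrite big1_eq. Qed.

Lemma cvgr0_D (f g : T -> K) :
  f @ F --> 0 -> g @ F --> 0 -> f t + g t @[t --> F] --> 0.
Proof. by move=> f0 g0; rewrite -(addr0 0); apply: cvgD. Qed.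

Lemma cvgr0_Ml (a : K) (g : T -> K) : g @ F --> 0 -> a * g t @[t --> F] --> 0.
Proof. by move=> g0; rewrite -(mulr0 a); apply: cvgMl_tmp. Qed.

End normed_convergence.

Lemma cauchy_distB0P {K : numFieldType} {V : normedModType K} (f : nat -> V) :
  cauchy (f @ \oo) <-> `|f p.1 - f p.2| @[p --> (\oo, \oo)] --> (0 : K).
Proof.
rewrite -cauchy_ballP; split => [f_cauchy|/cvgrPdist_lt f0 e e0].
  apply/cvgrPdist_lt => e e0; have := f_cauchy e e0.
  rewrite -ball_normE !near_simpl /=.
  by apply: filterS => -[m l] /=; rewrite sub0r normrN normr_id.
have := f0 e e0; rewrite -ball_normE !near_simpl /= -near2_pair.
by apply: filterS => -[m l] /=; rewrite sub0r normrN normr_id.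
Qed.

Lemma cvg_distB0 {K : numFieldType} {V : normedModType K} (f : nat -> V) (a : V) :
  f @ \oo --> a -> `|f p.1 - f p.2| @[p --> (\oo, \oo)] --> (0 : K).
Proof. by move=> f_a; apply: (cauchy_distB0P f).1; exact: cvg_cauchy (cvgP _ f_a). Qed.

Lemma ler_offdiag_colsum (K : numFieldType) (k : nat) (a b : 'I_k -> K)
    (C : 'I_k -> 'I_k -> K) :
  (forall j, 0 <= a j) ->
  (forall i, a i <= b i + \sum_(j | j != i) C i j * a j) ->
  (forall j, \sum_(i | i != j) C i j < 1) ->
  forall j, a j <= (1 - \sum_(i | i != j) C i j)^-1 * \sum_i b i.
Proof.
move=> a_ge0 a_le colsum_lt1 j.
pose col j := \sum_(i | i != j) C i j.
have col_ge0 i : 0 <= 1 - col i by rewrite subr_ge0; exact/ltW/colsum_lt1.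
have exchange : \sum_i \sum_(j | j != i) C i j * a j = \sum_j col j * a j.
  under eq_bigr do rewrite big_mkcond.
  rewrite exchange_big; apply: eq_bigr => j' _.
  rewrite /col mulr_suml [RHS]big_mkcond; apply: eq_bigr => i _.
  by rewrite eq_sym.
have weighted_le : \sum_j (1 - col j) * a j <= \sum_i b i.
  have : \sum_i a i <= \sum_i b i + \sum_j col j * a j.
    by rewrite -exchange -big_split; apply: ler_sum => i _.
  rewrite -lerBlDr -sumrB.
  by under eq_bigr do rewrite -{1}[a _]mul1r -mulrBl.
rewrite ler_pdivlMl; last by rewrite subr_gt0.
apply: le_trans weighted_le.
by rewrite [leRHS](bigD1 j) //= lerDl sumr_ge0 // => i _; rewrite mulr_ge0.
Qed.

Lemma ler_sum_inj {K : numDomainType} {I J : finType} (f : I -> J)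
    (P : pred I) (Q : pred J) (F : J -> K) :
  injective f -> (forall i, P i -> Q (f i)) -> (forall j, Q j -> 0 <= F j) ->
  \sum_(i | P i) F (f i) <= \sum_(j | Q j) F j.
Proof.
move=> f_inj PQ F_ge0; set S := f @: [set i | P i]%SET.
have -> : \sum_(i | P i) F (f i) = \sum_(j in S) F j.
  by rewrite big_imset /=; [apply: eq_bigl => i; rewrite inE | move=> ? ? _ _ /f_inj].
rewrite [leRHS](bigID (mem S)) /=.
have -> : \sum_(j | Q j && (j \in S)) F j = \sum_(j in S) F j.
  apply: eq_bigl => j; case Sj: (j \in S); rewrite ?andbF ?andbT //.
  by case/imsetP: Sj => i; rewrite inE => /PQ Qfi ->.
by rewrite lerDl sumr_ge0 // => j /andP[Qj _]; exact: F_ge0.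
Qed.

Lemma is_subspaceB {K : numFieldType} {V : lmodType K} {D : set V} :
  is_subspace D -> forall v w, D v -> D w -> D (v - w).
Proof.
case=> _ DD DZ v w Dv Dw.
by rewrite addrC -scaleN1r; apply: DD => //; apply: DZ.
Qed.

Lemma linear_onB {K : numFieldType} {U V : lmodType K} {D : set U} {f : U -> V} :
  linear_on D f -> forall v w, D v -> D w -> f (v - w) = f v - f w.
Proof.
move=> f_lin v w Dv Dw; have := f_lin (-1) w v Dw Dv.
by rewrite !scaleN1r addrC [- _ + _]addrC.
Qed.

Section relatively_bounded_operator_matrix.
Context {K : numFieldType} {n : nat} {X : 'I_n -> completeNormedModType K}.
Context {A : forall i j : 'I_n, X j -> X i} {D : forall i j : 'I_n, set (X j)}.
Context {c d : 'I_n -> 'I_n -> K}.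
Hypothesis subspaceD : forall i j, is_subspace (D i j).
Hypothesis linearA : forall i j, linear_on (D i j) (A i j).
Hypothesis closedA : forall i, closed_op (D i i) (A i i).
Hypothesis sub_domD : forall {i j}, i != j -> D j j `<=` D i j.
Hypothesis relboundA : forall {i j}, i != j ->
  [/\ 0 <= c i j, 0 <= d i j &
      forall x, D j j x -> `|A i j x| <= c i j * `|A j j x| + d i j * `|x| ].
Hypothesis colsum_lt1 : forall j, \sum_(i | i != j) c i j < 1.

Lemma relboundB {i j} {v w : X j} : i != j -> D j j v -> D j j w ->
  `|A i j v - A i j w| <= c i j * `|A j j v - A j j w| + d i j * `|v - w|.
Proof.
move=> ij Dv Dw; have [_ _ bound] := relboundA ij.
rewrite -(linear_onB (linearA j j) _ _ Dv Dw).
rewrite -(linear_onB (linearA i j) _ _ (sub_domD ij _ Dv) (sub_domD ij _ Dw)).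
exact/bound/(is_subspaceB (subspaceD j j)).
Qed.

Context {k : nat} {s : 'I_k -> 'I_n}.
Hypothesis s_inj : injective s.

Lemma colsum_sel_lt1 (j : 'I_k) : \sum_(i | i != j) c (s i) (s j) < 1.
Proof.
apply: le_lt_trans (colsum_lt1 (s j)).
apply: (ler_sum_inj _ _ _ (c^~ (s j)) s_inj) => [i|i' i'j].
  by rewrite (inj_eq s_inj).
by have [] := relboundA i'j.
Qed.

Lemma block_diag_bound (v w : forall i : 'I_k, X (s i)) :
  block_dom D v -> block_dom D w -> forall j,
  `|A (s j) (s j) (v j) - A (s j) (s j) (w j)| <=
  (1 - \sum_(i | i != j) c (s i) (s j))^-1 *
  \sum_i (`|block_apply A v i - block_apply A w i|
          + \sum_(l | l != i) d (s i) (s l) * `|v l - w l|).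
Proof.
move=> Dv Dw; apply: ler_offdiag_colsum colsum_sel_lt1 => [j|i] //.
have -> : A (s i) (s i) (v i) - A (s i) (s i) (w i) =
    block_apply A v i - block_apply A w i
    - \sum_(j | j != i) (A (s i) (s j) (v j) - A (s i) (s j) (w j)).
  by rewrite /block_apply -sumrB (bigD1 i) //= addrK.
apply: le_trans (ler_normB _ _) _.
rewrite -addrA lerD2l -big_split /=.
apply: le_trans (ler_norm_sum _ _ _) _; apply: ler_sum => j ji.
by rewrite addrC relboundB // (inj_eq s_inj) eq_sym.
Qed.

Lemma block_closed_inj : block_closed A D s.
Proof.
move=> u x y Du ux uy.
have cvg_diag j : cvg ((fun m => A (s j) (s j) (u m j)) @ \oo).
  apply/cauchy_cvgP; apply/cauchy_distB0P.
  apply: norm_cvgr0_le => [p|]; first exact: block_diag_bound.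
  apply: cvgr0_Ml; apply: cvgr0_sum => i _; apply: cvgr0_D; first exact: cvg_distB0 (uy i).
  by apply: cvgr0_sum => l _; apply: cvgr0_Ml; exact: cvg_distB0 (ux l).
have diag_lim j : D (s j) (s j) (x j) /\
    A (s j) (s j) (x j) = lim ((fun m => A (s j) (s j) (u m j)) @ \oo).
  exact: closedA (fun m => Du m j) (ux j) (cvg_diag j).
split => [j|i]; first by case: (diag_lim j).
have block_lim : (fun m => block_apply A (u m) i) @ \oo --> block_apply A x i.
  apply: cvg_sumr => j _.
  have [->|ji] := eqVneq j i; first by rewrite (diag_lim i).2; exact: cvg_diag.
  apply/cvgr_distB0P; apply: norm_cvgr0_le => [m|].
    by apply: relboundB (Du m j) (diag_lim j).1; rewrite (inj_eq s_inj) eq_sym.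
  apply: cvgr0_D; apply: cvgr0_Ml; apply/cvgr_distB0P => //.
  by rewrite (diag_lim j).2; exact: cvg_diag.
exact: cvg_unique block_lim (uy i).
Qed.

End relatively_bounded_operator_matrix.

Lemma perm_sel_inj (n k : nat) (pi : 'S_n) (hk : (k <= n)%N) :
  injective (perm_sel pi hk).
Proof. by move=> i j /perm_inj /(congr1 val) /= /val_inj. Qed.

Theorem lemma5p4 (R : realType) (n : nat)
  (X : 'I_n -> completeNormedModType R[i])
  (A : forall i j : 'I_n, X j -> X i) (D : forall i j : 'I_n, set (X j))
  (c d : 'I_n -> 'I_n -> R[i]) :
  (2 <= n)%N ->
  (forall i j, is_subspace (D i j)) ->
  (forall i j, linear_on (D i j) (A i j)) ->
  (forall i, closed_op (D i i) (A i i)) ->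
  (forall i j, i != j -> D j j `<=` D i j) ->
  (forall i j, i != j ->
     [/\ 0 <= c i j, 0 <= d i j &
         forall x, D j j x -> `|A i j x| <= c i j * `|A j j x| + d i j * `|x| ]) ->
  (forall j, \sum_(i | i != j) c i j < 1) ->
  forall (pi : 'S_n) (k : nat) (hk : (k <= n)%N), (1 <= k)%N ->
    block_closed A D (perm_sel pi hk).
Proof.
move=> _ subspaceD linearA closedA sub_domD relboundA colsum_lt1 pi k hk _.
apply: (block_closed_inj subspaceD linearA closedA sub_domD relboundA colsum_lt1).
exact: perm_sel_inj.
Qed.
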